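(* Let $\mathbf d=(d_1,\ldots,d_n)$ be positive integers and let $\tilde{\mathcal H}=V\left(\left(\prod_{i=1}^n(x_i+1)\right)-1\right)\subset\mathbb{C}^n$. Then the $\mathbf d$-osculants of $\tilde{\mathcal H}$ are in bijection with the primitive $\mathbf d$-necklaces.
   Context: $|\mathbf d|=\sum d_i$. A $\mathbf d$-parametrization is a polynomial map $\mathbf x(t)=(x_1(t),\ldots,x_n(t))$ with $x_i\in\mathbb{C}[t]$ of degree $d_i$ and $\mathbf x(0)=\mathbf 0$; it is $1$-fold if generically one-to-one onto its image. A $\mathbf d$-osculant of $V(f)$ is a curve which is the image of a $1$-fold $\mathbf d$-parametrization with $f(\mathbf x(t))\equiv0\pmod{t^{|\mathbf d|}}$ (counted as distinct image curves). A $\mathbf d$-necklace is a circular arrangement of $|\mathbf d|$ beads with $d_i$ of color $i$, modulo rotation; it is primitive if its rotation orbit has $|\mathbf d|$ elements. *)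

From HB Require Import structures.
From mathcomp Require Import all_boot all_order all_algebra.
From mathcomp Require Import complex.
From mathcomp Require Import reals.
Set Implicit Arguments. Unset Strict Implicit. Unset Printing Implicit Defensive.
Import Order.TTheory GRing.Theory Num.Theory.
Local Open Scope ring_scope.

Definition dsum (n : nat) (d : 'I_n -> nat) : nat := (\sum_(i < n) d i)%N.

Section Osc.
Variable C : fieldType.
Variable n : nat.

Definition peval (x : 'I_n -> {poly C}) (t : C) : {ffun 'I_n -> C} :=
  [ffun i => (x i).[t]].

Definition is_dparam (d : 'I_n -> nat) (x : 'I_n -> {poly C}) : Prop :=
  forall i, size (x i) = (d i).+1 /\ (x i).[0] = 0.

Definition one_fold (x : 'I_n -> {poly C}) : Prop :=
  exists S : seq C, forall t s, t \notin S -> peval x t = peval x s -> s = t.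

Definition image_curve (x : 'I_n -> {poly C}) : {ffun 'I_n -> C} -> Prop :=
  fun p => exists t, p = peval x t.

(* f(x(t)) = 0 mod t^|d| for f = prod_i (x_i + 1) - 1 *)
Definition osc_condH (d : 'I_n -> nat) (x : 'I_n -> {poly C}) : bool :=
  'X^(dsum d) %| (\prod_(i < n) (x i + 1) - 1).

Definition is_d_osculantH (d : 'I_n -> nat) (G : {ffun 'I_n -> C} -> Prop) : Prop :=
  exists x : 'I_n -> {poly C},
    [/\ is_dparam d x, one_fold x, osc_condH d x & G = image_curve x].
End Osc.

Section Neck.
Variable n : nat.
Variable d : 'I_n -> nat.
Definition word := (dsum d).-tuple 'I_n.

Definition d_word (w : word) : bool := [forall i : 'I_n, count_mem i w == d i].

Definition necklace_of (w : word) : {set word} :=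
  [set [tuple of rot k w] | k : 'I_(dsum d)].

Definition is_d_necklace (S : {set word}) : Prop :=
  exists w, d_word w /\ S = necklace_of w.

Definition is_primitive_d_necklace (S : {set word}) : Prop :=
  is_d_necklace S /\ #|S| = dsum d.
End Neck.

From HB Require Import structures.
From mathcomp Require Import all_boot all_order all_algebra.
From mathcomp Require Import complex reals boolp.
From mathcomp Require Import cyclic separable cyclotomic zify.
Import Order.TTheory GRing.Theory Num.Theory.
Local Open Scope ring_scope.
Set Implicit Arguments. Unset Strict Implicit. Unset Printing Implicit Defensive.

(* Let N = |d| and let z be a primitive N-th root of unity. For a
   d-parametrization x, the osculation condition forces
   prod_i (x_i + 1) = 1 + c t^N, whose N roots b z^k are simple; so after the
   substitution t -> b t, each x_i + 1 is the product of the 1 - t / z^k over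
   the k in a colour class of size d_i, i.e. x comes from a d-word w.
   Substituting z^m t for t rotates w by m without moving the image curve;
   conversely a generic point of the curve of u lies on the curve of v only at
   a parameter z^m t with u the rotation of v by m. Hence image curves
   correspond to necklaces, and the curve of w is traced once exactly when no
   nontrivial rotation fixes w, i.e. when its necklace is primitive. *)

Lemma count_mem_tnth (T : eqType) N (w : N.-tuple T) c :
  count_mem c w = #|[pred k | tnth w k == c]|.
Proof.
rewrite -{1}(map_tnth_enum w) count_map -sum1_count -sum1_card.
by rewrite enumT big_enum_val.
Qed.

Section Rotation.
Variable T : Type.

Definition aperiodic (s : seq T) : Prop :=
  forall m, (0 < m < size s)%N -> rot m s <> s.

Lemma nth_rot_mod (x0 : T) (s : seq T) m k :
  (m < size s)%N -> (k < size s)%N ->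
  nth x0 (rot m s) k = nth x0 s ((k + m) %% size s).
Proof.
move=> lt_m lt_k; rewrite /rot nth_cat size_drop.
case: ifP => k_small.
  by rewrite nth_drop addnC modn_small //; lia.
have -> : (k + m = (k + m - size s) + size s)%N by lia.
rewrite modnDr modn_small ?nth_take; [congr nth | |]; lia.
Qed.

End Rotation.

Section Necklaces.
Variables (n : nat) (d : 'I_n -> nat).
Local Notation N := (dsum d).
Hypothesis N_gt0 : (0 < N)%N.

Definition rot_ord (m k : 'I_N) : 'I_N := Ordinal (ltn_pmod (k + m) N_gt0).

Lemma rot_ord_inj m : injective (rot_ord m).
Proof.
move=> j k /(congr1 val) /= /eqP; rewrite eqn_modDr !modn_small // => /eqP.
exact: val_inj.
Qed.

Lemma tnth_rot (w : word d) (m k : 'I_N) :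
  tnth [tuple of rot m w] k = tnth w (rot_ord m k).
Proof.
pose x0 := tnth w k; rewrite (tnth_nth x0) [RHS](tnth_nth x0) /=.
by rewrite nth_rot_mod ?size_tuple.
Qed.

Lemma rot_rot_ord (w : word d) (m j : 'I_N) :
  [tuple of rot j [tuple of rot m w]] = [tuple of rot (rot_ord m j) w].
Proof.
apply: eq_from_tnth => k; rewrite !tnth_rot; congr tnth; apply: val_inj => /=.
by rewrite modnDml modnDmr addnA.
Qed.

Lemma mem_necklace_of (w : word d) : w \in necklace_of w.
Proof. by apply/imsetP; exists (Ordinal N_gt0) => //; apply: val_inj; rewrite /= rot0. Qed.

Lemma necklace_of_rot (w : word d) (m : 'I_N) :
  necklace_of [tuple of rot m w] = necklace_of w.
Proof.
have sub (u v : word d) : u \in necklace_of v -> necklace_of u \subset necklace_of v.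
  case/imsetP=> j _ ->; apply/subsetP=> _ /imsetP[k _ ->].
  by rewrite rot_rot_ord imset_f.
apply/eqP; rewrite eqEsubset sub ?imset_f //=; apply: sub.
apply/imsetP; exists (Ordinal (ltn_pmod (N - m) N_gt0)) => //.
rewrite rot_rot_ord; apply: val_inj => /=.
by rewrite modnDml subnK ?modnn ?rot0 // ltnW.
Qed.

Lemma card_necklace_ofP (w : word d) : #|necklace_of w| = N <-> aperiodic w.
Proof.
rewrite /aperiodic size_tuple; split=> [card_w m /andP[m_gt0 lt_mN] rot_w | aper_w].
  have /imset_injP inj_rot : #|necklace_of w| == #|'I_N| by rewrite card_ord card_w.
  have rot_m_0 : [tuple of rot (Ordinal lt_mN) w] = [tuple of rot (Ordinal N_gt0) w].
    by apply: val_inj; rewrite /= rot_w rot0.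
  by have /(congr1 val) /= m0 := inj_rot _ _ isT isT rot_m_0; rewrite m0 in m_gt0.
rewrite card_in_imset ?card_ord //.
have no_coincidence (j k : 'I_N) : (j < k)%N -> rot j w <> rot k w.
  move=> lt_jk rot_jk; have lt_kN := ltn_ord k.
  apply: (aper_w (k - j)%N); first by apply/andP; split; lia.
  apply: (@rot_inj j); rewrite -rotD ?subnKC ?size_tuple //; lia.
move=> j k _ _ /(congr1 val) /= rot_jk.
by case: (ltngtP j k) => [/no_coincidence | /no_coincidence /(_ (esym rot_jk)) |
  /val_inj].
Qed.

End Necklaces.

Lemma exists_prim_root (C : numClosedFieldType) N :
  (0 < N)%N -> exists z : C, N.-primitive_root z.
Proof.
move=> N_gt0; have [rs Drs] := closed_field_poly_normal ('X^N - 1 : {poly C}).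
rewrite lead_coefXnsubC // scale1r in Drs.
have rs_unity : all N.-unity_root rs by apply/allP=> x; rewrite -root_prod_XsubC -Drs.
have rs_uniq : uniq rs.
  by rewrite -separable_prod_XsubC -Drs separable_Xn_sub_1 // pnatr_eq0 -lt0n.
have size_rs : (N <= size rs)%N.
  by rewrite -ltnS -(size_prod_XsubC rs id) -Drs size_XnsubC.
by have /hasP[z _] := has_prim_root N_gt0 rs_unity rs_uniq size_rs; exists z.
Qed.

Section ClosedField.
Variable C : closedFieldType.

Lemma exists_notin (S : seq C) : exists t, t \notin S.
Proof.
have /closed_nonrootP[t] : \prod_(s <- S) ('X - s%:P) != 0 :> {poly C}.
  by rewrite monic_neq0 // monic_prod_XsubC.
by rewrite root_prod_XsubC; exists t.
Qed.

Lemma cofinite_nonroot (p : {poly C}) :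
  p != 0 -> exists S : seq C, forall t, t \notin S -> ~~ root p t.
Proof.
move=> p_neq0; have [rs Drs] := closed_field_poly_normal p.
by exists rs => t; rewrite Drs rootZ ?lead_coef_eq0 // root_prod_XsubC.
Qed.

End ClosedField.

Section Reparametrization.
Variables (C : fieldType) (n : nat) (x y : 'I_n -> {poly C}) (c : C).
Hypotheses (c_neq0 : c != 0) (x_scale_y : forall t, peval x (c * t) = peval y t).

Lemma image_curve_scale : image_curve x = image_curve y.
Proof.
apply: funext => p; apply: propext; split=> -[t ->].
  by exists (t / c); rewrite -x_scale_y mulrC divfK.
by exists (c * t); rewrite x_scale_y.
Qed.

Lemma one_fold_scale : one_fold x -> one_fold y.
Proof.
case=> S x_inj; exists [seq s / c | s <- S] => t s t_notin y_ts.
apply: (mulfI c_neq0); apply: x_inj; last by rewrite !x_scale_y.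
apply: contra t_notin => ct_in; apply/mapP; exists (c * t) => //.
by rewrite mulrC mulKf.
Qed.

End Reparametrization.

Lemma eqp_scale_horner0 (C : fieldType) (p q : {poly C}) :
  p %= q -> p.[0] = 1 -> p = (q.[0])^-1 *: q.
Proof.
case/eqpP=> -[a b] /= /andP[a_neq0 b_neq0] ab_pq p0_eq1.
have a_eq : a = b * q.[0].
  by move/(congr1 (horner^~ 0)): ab_pq; rewrite !hornerZ p0_eq1 mulr1.
have q0_neq0 : q.[0] != 0.
  by apply: contraNneq a_neq0; rewrite a_eq => ->; rewrite mulr0.
by apply: (scalerI a_neq0); rewrite ab_pq scalerA a_eq mulfK.
Qed.

Section ColourPoly.
Variables (C : fieldType) (N n : nat).
Implicit Types (r : 'I_N -> C) (g : 'I_N -> 'I_n).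

Definition colour_poly r g i : {poly C} := \prod_(k < N | g k == i) ('X - (r k)%:P).

Definition colour_param r g i : {poly C} :=
  ((colour_poly r g i).[0])^-1 *: colour_poly r g i - 1.

Lemma horner_colour_poly r g i t :
  (colour_poly r g i).[t] = \prod_(k < N | g k == i) (t - r k).
Proof. by rewrite horner_prod; apply: eq_bigr => k _; rewrite hornerXsubC. Qed.

Lemma horner_colour_param r g i t :
  (colour_param r g i).[t] = (colour_poly r g i).[t] / (colour_poly r g i).[0] - 1.
Proof. by rewrite !hornerE mulrC. Qed.

Lemma horner_colour_poly_eq0 r g i k : injective r ->
  ((colour_poly r g i).[r k] == 0) = (g k == i).
Proof.
move=> r_inj; rewrite horner_colour_poly.
apply/prodf_eq0/idP => [[j /eqP <-] | gk_i]; last by exists k; rewrite ?subrr.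
by rewrite subr_eq0 => /eqP/r_inj ->.
Qed.

Lemma size_colour_poly r g i : size (colour_poly r g i) = #|[pred k | g k == i]|.+1.
Proof.
rewrite /colour_poly (eq_bigl (mem [pred k | g k == i])) //.
by rewrite -big_enum size_prod_XsubC cardE.
Qed.

Lemma prod_colour_param r g :
  \prod_(i < n) (colour_param r g i + 1) =
  ((\prod_(k < N) ('X - (r k)%:P)).[0])^-1 *: \prod_(k < N) ('X - (r k)%:P).
Proof.
have prod_colour_poly : \prod_(i < n) colour_poly r g i = \prod_(k < N) ('X - (r k)%:P).
  by rewrite [RHS](partition_big g predT).
under eq_bigr => i _ do rewrite subrK.
by rewrite scaler_prod prodfV -horner_prod prod_colour_poly.
Qed.

Lemma eq_colour_param r1 r2 g1 g2 i : r1 =1 r2 -> g1 =1 g2 ->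
  colour_param r1 g1 i = colour_param r2 g2 i.
Proof.
move=> r12 g12; rewrite /colour_param.
have -> // : colour_poly r1 g1 i = colour_poly r2 g2 i.
by apply: eq_big => [k | k _]; rewrite ?g12 ?r12.
Qed.

Lemma colour_param_reindex r g (h : 'I_N -> 'I_N) i : injective h ->
  colour_param (fun k => r (h k)) (fun k => g (h k)) i = colour_param r g i.
Proof.
move=> h_inj; rewrite /colour_param.
have -> // : colour_poly (fun k => r (h k)) (fun k => g (h k)) i = colour_poly r g i.
by rewrite /colour_poly [RHS](reindex_inj h_inj).
Qed.

Lemma horner_colour_param_scale r g i c t : c != 0 ->
  (colour_param r g i).[c * t] = (colour_param (fun k => r k / c) g i).[t].
Proof.
move=> c_neq0; rewrite !horner_colour_param !horner_colour_poly.
have pull_c u : \prod_(k < N | g k == i) (c * u - r k) =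
    \prod_(k < N | g k == i) c * \prod_(k < N | g k == i) (u - r k / c).
  by rewrite -big_split; apply: eq_bigr => k _ /=; rewrite mulrBr mulrCA divff ?mulr1.
have cP_neq0 : \prod_(k < N | g k == i) c != 0 by apply/prodf_neq0.
by have := pull_c 0; rewrite mulr0 => ->; rewrite pull_c invfM mulrACA divff ?mul1r.
Qed.

Lemma colour_factorization (p : 'I_n -> {poly C}) (d : 'I_n -> nat) r :
  injective r -> N = (\sum_i d i)%N -> (forall i, size (p i) = (d i).+1) ->
  (forall k, exists i, root (p i) (r k)) ->
  exists g, forall i, p i %= colour_poly r g i /\ #|[pred k | g k == i]| = d i.
Proof.
move=> r_inj N_eq size_p has_root; pose g k := xchoose (has_root k).
have root_g k : root (p (g k)) (r k) := xchooseP (has_root k).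
exists g.
have dvd_p i : colour_poly r g i %| p i.
  rewrite /colour_poly (eq_bigl (mem [pred k | g k == i])) // -big_enum.
  rewrite -(big_map r predT (fun x => 'X - x%:P)).
  apply: uniq_roots_dvdp; last by rewrite uniq_rootsE map_inj_uniq ?enum_uniq.
  by apply/allP => x /mapP[k]; rewrite mem_enum inE => /eqP <- ->.
have le_d i : (#|[pred k | g k == i]| <= d i)%N.
  have p_neq0 : p i != 0 by rewrite -size_poly_eq0 size_p.
  by have := dvdp_leq p_neq0 (dvd_p i); rewrite size_colour_poly size_p ltnS.
(* The colour classes partition the [N = \sum_i d i] roots, so no inequality
   is strict. *)
have sum_card : (\sum_i #|[pred k | g k == i]| = \sum_i d i)%N.
  rewrite -N_eq -[in RHS](card_ord N) -sum1_card (partition_big g predT) //=.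
  by apply: eq_bigr => i _; rewrite sum1_card.
have [_] := leqif_sum (fun i (_ : true) => leqif_eq (le_d i)).
rewrite sum_card eqxx => /esym /forall_inP card_eq i.
have card_i : #|[pred k | g k == i]| = d i by apply/eqP/card_eq.
by split=> //; rewrite eqp_sym -dvdp_size_eqp ?dvd_p // size_colour_poly size_p card_i.
Qed.

End ColourPoly.

Section Osculation.
Variables (C : fieldType) (n : nat) (d : 'I_n -> nat) (x : 'I_n -> {poly C}).
Hypotheses (d_gt0 : forall i, (0 < d i)%N) (x_dparam : is_dparam d x).

Lemma size_dparam_add1 i : size (x i + 1) = (d i).+1.
Proof. by have [size_i _] := x_dparam i; rewrite size_polyDl size_i // size_poly1 ltnS. Qed.

Lemma osc_condH_prod : (0 < dsum d)%N -> osc_condH d x ->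
  exists2 c, c != 0 & \prod_(i < n) (x i + 1) = 1 + c *: 'X^(dsum d).
Proof.
move=> N_gt0 /dvdpP[q Dq].
have size_prod_x : size (\prod_(i < n) (x i + 1)) = (dsum d).+1.
  rewrite size_prod => [|i _]; last by rewrite -size_poly_eq0 size_dparam_add1.
  under eq_bigr => i _ do rewrite size_dparam_add1 -addn1.
  by rewrite big_split /= sum1_card -addSn addnK.
have size_q_mulX : size (q * 'X^(dsum d)) = (dsum d).+1.
  by rewrite -Dq size_polyDl size_prod_x // size_polyN size_poly1 ltnS.
have q_neq0 : q != 0 by apply: contraPneq size_q_mulX => ->; rewrite mul0r size_poly0.
have /size_poly1P[c c_neq0 Dc] : size q == 1%N.
  by move: size_q_mulX; rewrite size_mulXn // -addn1 => /addnI ->.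
by exists c; rewrite // -mul_polyC -Dc -Dq addrC subrK.
Qed.

End Osculation.

Section WordParam.
Variables (C : numClosedFieldType) (n : nat) (d : 'I_n -> nat) (z : C).
Local Notation N := (dsum d).
Hypotheses (N_gt0 : (0 < N)%N) (z_prim : N.-primitive_root z).
Local Notation zpow := (fun k : 'I_N => z ^+ k).
Implicit Types u v w : word d.

Definition word_param (w : word d) : 'I_n -> {poly C} := colour_param zpow (tnth w).

Let z_neq0 : z != 0.
Proof. by rewrite (prim_root_eq0 z_prim) -lt0n. Qed.

Let zpow_inj : injective zpow.
Proof.
move=> j k /eqP; rewrite (eq_prim_root_expr z_prim) !modn_small // => /eqP.
exact: val_inj.
Qed.

Let colour_poly_zpow0 (g : 'I_N -> 'I_n) i : (colour_poly zpow g i).[0] != 0.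
Proof.
rewrite horner_colour_poly; apply/prodf_neq0 => k _.
by rewrite sub0r oppr_eq0 expf_neq0.
Qed.

Lemma prod_word_param w : \prod_(i < n) (word_param w i + 1) = 1 - 'X^N.
Proof.
have unity : \prod_(k < N) ('X - (z ^+ k)%:P) = 'X^N - 1.
  by rewrite -(factor_Xn_sub_1 z_prim) big_mkord.
rewrite prod_colour_param unity !hornerE expr0n eqn0Ngt N_gt0 /= sub0r invrN1.
by rewrite scaleN1r opprB.
Qed.

Lemma horner_prod_word_param w t :
  \prod_(i < n) ((word_param w i).[t] + 1) = 1 - t ^+ N.
Proof.
have <- : (1 - 'X^N : {poly C}).[t] = 1 - t ^+ N by rewrite !hornerE.
rewrite -(prod_word_param w) horner_prod; apply: eq_bigr => i _.
by rewrite [RHS]hornerD hornerC.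
Qed.

Lemma word_param_dparam w :
  (forall i, (0 < d i)%N) -> d_word w -> is_dparam d (word_param w).
Proof.
move=> d_gt0 /forallP d_w i.
have card_i : #|[pred k | tnth w k == i]| = d i.
  by rewrite -count_mem_tnth; apply/eqP/d_w.
have scale_neq0 : ((colour_poly zpow (tnth w) i).[0])^-1 != 0.
  by rewrite invr_eq0 colour_poly_zpow0.
split; last by rewrite horner_colour_param divff ?colour_poly_zpow0 // subrr.
rewrite size_polyDl size_scale // size_colour_poly card_i //.
by rewrite size_polyN size_poly1 ltnS.
Qed.

Lemma word_param_osc w : osc_condH d (word_param w).
Proof. by rewrite /osc_condH prod_word_param addrAC subrr add0r dvdpNr dvdpp. Qed.

Lemma horner_word_param_rot w (m : 'I_N) i t :
  (word_param [tuple of rot m w] i).[t] = (word_param w i).[z ^+ m * t].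
Proof.
rewrite /word_param horner_colour_param_scale ?expf_neq0 //; congr horner.
rewrite -(colour_param_reindex (fun k => z ^+ k / z ^+ m) (tnth w) i
  (@rot_ord_inj _ _ N_gt0 m)).
apply: eq_colour_param => k; last exact: tnth_rot.
by rewrite /= prim_expr_mod // exprD mulfK ?expf_neq0.
Qed.

Lemma word_param_inj u v : word_param u =1 word_param v -> u = v.
Proof.
move=> uv; apply: eq_from_tnth => k; apply/eqP; rewrite eq_sym.
rewrite -(horner_colour_poly_eq0 _ _ _ zpow_inj).
have := congr1 (horner^~ (z ^+ k)) (uv (tnth u k)).
rewrite /word_param !horner_colour_param.
have /eqP -> : (colour_poly zpow (tnth u) (tnth u k)).[z ^+ k] == 0.
  by rewrite (horner_colour_poly_eq0 _ _ _ zpow_inj).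
move=> /addIr /esym /eqP; rewrite mul0r mulf_eq0 invr_eq0.
by rewrite (negbTE (colour_poly_zpow0 _ _)) orbF.
Qed.

Lemma word_param_pow_eq u v t s :
  peval (word_param u) t = peval (word_param v) s -> t ^+ N = s ^+ N.
Proof.
move=> uv_ts; apply: oppr_inj; apply: (addrI 1).
rewrite -(horner_prod_word_param u) -(horner_prod_word_param v); apply: eq_bigr => i _.
by move/ffunP/(_ i): uv_ts; rewrite !ffunE => ->.
Qed.

Lemma word_param_fibre u v : exists S : seq C, forall t s, t \notin S ->
  peval (word_param u) t = peval (word_param v) s ->
  exists m : 'I_N, s = z ^+ m * t /\ u = [tuple of rot m v].
Proof.
(* A non-root [t] of [P] is nonzero, and at [t] each [word_param u i] takes
   a value different from that of each [word_param (rot m v) i] it differs from. *)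
pose D (m : 'I_N) := \prod_(i < n | word_param u i != word_param [tuple of rot m v] i)
  (word_param u i - word_param [tuple of rot m v] i).
pose P := 'X * \prod_(m < N) D m.
have P_neq0 : P != 0.
  rewrite mulf_neq0 ?polyX_eq0 //; apply/prodf_neq0 => m _.
  by apply/prodf_neq0 => i; rewrite subr_eq0.
have [S nonroot_S] := cofinite_nonroot P_neq0.
exists S => t s /nonroot_S; rewrite /P rootM rootX negb_or => /andP[t_neq0].
rewrite /root horner_prod => /prodf_neq0 D_neq0 uv_ts.
have : (s / t) ^+ N = 1 by rewrite expr_div_n -(word_param_pow_eq uv_ts) divff ?expf_neq0.
case/(prim_rootP z_prim)=> m Dm; have Ds : s = z ^+ m * t by rewrite -Dm divfK.
exists m; split=> //; apply: word_param_inj => i; apply/eqP; apply: contraT => ne_i.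
have := D_neq0 m isT; rewrite horner_prod => /prodf_neq0/(_ i ne_i).
rewrite hornerD hornerN subr_eq0 horner_word_param_rot -Ds.
by move/ffunP/(_ i): uv_ts; rewrite !ffunE => ->; rewrite eqxx.
Qed.

Lemma image_word_paramP u v :
  image_curve (word_param u) = image_curve (word_param v) <->
  necklace_of u = necklace_of v.
Proof.
split=> [uv | nuv].
  have [S fibre] := word_param_fibre u v; have [t t_notin] := exists_notin S.
  have [s uv_ts] : image_curve (word_param v) (peval (word_param u) t).
    by rewrite -uv; exists t.
  by have [m [_ ->]] := fibre t s t_notin uv_ts; rewrite necklace_of_rot.
have /imsetP[m _ ->] : u \in necklace_of v by rewrite -nuv mem_necklace_of.
symmetry; apply: (image_curve_scale (expf_neq0 m z_neq0)) => t.
by apply/ffunP => i; rewrite !ffunE horner_word_param_rot.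
Qed.

Lemma one_fold_word_paramP w : one_fold (word_param w) <-> aperiodic w.
Proof.
split=> [[S w_inj] m /andP[m_gt0 lt_mN] rot_w | aper_w].
  have [t] := exists_notin (0 :: S); rewrite inE negb_or => /andP[t_neq0 t_notin].
  have m_N : (m < N)%N by rewrite size_tuple in lt_mN.
  have fix_t : peval (word_param w) t = peval (word_param w) (z ^+ m * t).
    apply/ffunP => i; rewrite !ffunE -(horner_word_param_rot w (Ordinal m_N)).
    by congr horner; congr word_param; apply: val_inj.
  have := w_inj t _ t_notin fix_t; rewrite -{2}(mul1r t) => /(mulIf t_neq0)/eqP.
  by rewrite -(prim_order_dvd z_prim) => /(dvdn_leq m_gt0); rewrite leqNgt m_N.
have [S fibre] := word_param_fibre w w; exists S => t s t_notin w_ts.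
have [m [-> rot_w]] := fibre t s t_notin w_ts.
case: (posnP m) => [m0 | m_gt0]; first by rewrite m0 mul1r.
have lt_mN : (m < size w)%N by rewrite size_tuple.
by case: (aper_w m); rewrite ?m_gt0 // {2}rot_w.
Qed.

Lemma osculant_word_param x : (forall i, (0 < d i)%N) ->
  is_dparam d x -> osc_condH d x ->
  exists b (w : word d),
    [/\ b != 0, d_word w & forall t, peval x (b * t) = peval (word_param w) t].
Proof.
move=> d_gt0 x_dparam x_osc.
have [c c_neq0 Dprod] := osc_condH_prod d_gt0 x_dparam N_gt0 x_osc.
(* The roots of [1 + c t^N] are the [b z^k]. *)
pose b := N.-root (- c^-1); pose r (k : 'I_N) := b * z ^+ k.
have bN : b ^+ N = - c^-1 by rewrite rootCK.
have b_neq0 : b != 0 by rewrite rootC_eq0 // oppr_eq0 invr_eq0.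
have r_inj : injective r by move=> j k /(mulfI b_neq0) /zpow_inj.
have has_root k : exists i, root (x i + 1) (r k).
  have : root (\prod_(i < n) (x i + 1)) (r k).
    rewrite Dprod /root !hornerE /r exprMn bN -exprM mulnC exprM.
    by rewrite (prim_expr_order z_prim) expr1n mulr1 mulrN mulfV // addrN.
  by rewrite /root horner_prod => /prodf_eq0[i _]; exists i.
have [g Hg] :=
  colour_factorization r_inj (erefl _) (size_dparam_add1 d_gt0 x_dparam) has_root.
have Dx i : x i = colour_param r g i.
  have x1_0 : (x i + 1).[0] = 1 by rewrite hornerD (proj2 (x_dparam i)) hornerC add0r.
  by rewrite /colour_param -(eqp_scale_horner0 (proj1 (Hg i)) x1_0) addrK.
pose w : word d := [tuple g k | k < N].
exists b, w; split=> // [|t].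
  apply/forallP => i; rewrite count_mem_tnth -(proj2 (Hg i)).
  by apply/eqP/eq_card => k; rewrite !inE tnth_mktuple.
apply/ffunP => i; rewrite !ffunE Dx horner_colour_param_scale //; congr horner.
by apply: eq_colour_param => k; rewrite ?tnth_mktuple // /r mulrC mulKf.
Qed.

End WordParam.

Theorem theorem3p6 (R : realType) (n : nat) (d : 'I_n -> nat)
  (hn : (0 < n)%N) (hd : forall i, (0 < d i)%N) :
  exists phi : {set word d} -> ({ffun 'I_n -> R[i]} -> Prop),
    (forall S1 S2, is_primitive_d_necklace S1 -> is_primitive_d_necklace S2 ->
        phi S1 = phi S2 -> S1 = S2) /\
    (forall S, is_primitive_d_necklace S -> is_d_osculantH d (phi S)) /\
    (forall G, is_d_osculantH d G ->
        exists2 S, is_primitive_d_necklace S & G = phi S).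
Proof.
have N_gt0 : (0 < dsum d)%N by rewrite /dsum (bigD1 (Ordinal hn)) //= ltn_addr ?hd.
have [z z_prim] := exists_prim_root R[i] N_gt0.
pose phi (S : {set word d}) :=
  if [pick u in S] is Some u then image_curve (word_param z u) else fun _ => False.
have phi_necklace w : phi (necklace_of w) = image_curve (word_param z w).
  rewrite /phi; case: pickP => [u u_in | none]; last first.
    by have := none w; rewrite mem_necklace_of.
  apply/(image_word_paramP N_gt0 z_prim).
  by case/imsetP: u_in => m _ ->; rewrite necklace_of_rot.
exists phi; split; [|split].
- move=> _ _ [[u [_ ->]] _] [[v [_ ->]] _]; rewrite !phi_necklace.
  by move/(image_word_paramP N_gt0 z_prim).
- move=> _ [[w [d_w ->]] card_w]; rewrite phi_necklace.
  exists (word_param z w); split=> //.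
  + exact: word_param_dparam.
  + exact/(one_fold_word_paramP N_gt0 z_prim)/(card_necklace_ofP N_gt0).
  + exact: word_param_osc.
- move=> _ [x [x_dparam x_one_fold x_osc ->]].
  have [b [w [b_neq0 d_w x_w]]] := osculant_word_param N_gt0 z_prim hd x_dparam x_osc.
  exists (necklace_of w); last by rewrite phi_necklace (image_curve_scale b_neq0 x_w).
  split; first by exists w.
  apply/(card_necklace_ofP N_gt0)/(one_fold_word_paramP N_gt0 z_prim).
  exact: one_fold_scale b_neq0 x_w x_one_fold.
Qed.
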